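(* Let $X$ be a (complete) doubling metric measure space and let $E\subset X$ be a closed set. Then $\overline{\operatorname{co\,dim}}_A(E)$ equals the infimum of all $q\ge0$ for which there exists $C>0$ such that \[\mathcal H^{\mu,q}_R\big(E\cap B(w,R)\big)\ge C\,R^{-q}\mu(B(w,R))\] for every $w\in E$ and all $0<R<\operatorname{diam}(E)$.
   Context: $(X,d,\mu)$ is a complete metric space with a Borel measure $\mu$ such that every closed ball $B(x,r)=\{y:d(x,y)\le r\}$, $r>0$, has $0<\mu(B(x,r))<\infty$, and $\mu$ is doubling. For $E\subset X$ and $r>0$, $E_r=\{x\in X:\operatorname{dist}(x,E)<r\}$. The upper Assouad codimension $\overline{\operatorname{co\,dim}}_A(E)$ is the infimum of all $s\ge0$ for which there is $c>0$ such that $\frac{\mu(E_r\cap B(x,R))}{\mu(B(x,R))}\ge c(r/R)^s$ for every $x\in E$ and all $0<r<R<\operatorname{diam}(E)$. For $q\ge0$ and $R>0$, the Hausdorff content of codimension $q$ is $\mathcal H_R^{\mu,q}(A)=\inf\{\sum_k\operatorname{rad}(B_k)^{-q}\mu(B_k): A\subset\bigcup_k B_k,\ \operatorname{rad}(B_k)\le R\}$, the infimum over countable covers by balls. *)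

From Stdlib Require Import Reals.
Open Scope R_scope.

Inductive Rbar : Type := Finite (x : R) | p_infty.

Definition Rbar_le (a b : Rbar) : Prop :=
  match a, b with
  | _, p_infty => True
  | p_infty, Finite _ => False
  | Finite x, Finite y => x <= y
  end.

(** Real part (used only on values known to be finite). *)
Definition real (a : Rbar) : R := match a with Finite x => x | p_infty => 0 end.

Definition Rbar_series (f : nat -> Rbar) (v : Rbar) : Prop :=
  (exists l, v = Finite l /\ (forall n, f n = Finite (real (f n)))
      /\ infinite_sum (fun n => real (f n)) l)
  \/ (v = p_infty /\
      ((exists n, f n = p_infty) \/
       ((forall n, f n = Finite (real (f n))) /\
        ~ (exists l, infinite_sum (fun n => real (f n)) l)))).

Section Metric.
Variable X : Type.
Variable d : X -> X -> R.

Definition is_metric : Prop :=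
  (forall x y, 0 <= d x y) /\ (forall x y, d x y = 0 <-> x = y) /\
  (forall x y, d x y = d y x) /\ (forall x y z, d x z <= d x y + d y z).

Definition complete : Prop :=
  forall u : nat -> X,
    (forall eps, 0 < eps -> exists N, forall m n, (N <= m)%nat -> (N <= n)%nat -> d (u m) (u n) < eps) ->
    exists l, forall eps, 0 < eps -> exists N, forall n, (N <= n)%nat -> d (u n) l < eps.

Definition ball (x : X) (r : R) : X -> Prop := fun y => d x y <= r.

Definition open (U : X -> Prop) : Prop :=
  forall x, U x -> exists r, 0 < r /\ forall y, d x y < r -> U y.

Definition closed (E : X -> Prop) : Prop := open (fun x => ~ E x).

Inductive borel : (X -> Prop) -> Prop :=
  | borel_open : forall U, open U -> borel U
  | borel_compl : forall A, borel A -> borel (fun x => ~ A x)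
  | borel_union : forall A : nat -> X -> Prop, (forall n, borel (A n)) ->
                    borel (fun x => exists n, A n x).

Definition is_borel_measure (mu : (X -> Prop) -> Rbar) : Prop :=
  (forall A, borel A -> Rbar_le (Finite 0) (mu A)) /\
  mu (fun _ => False) = Finite 0 /\
  (forall A : nat -> X -> Prop, (forall n, borel (A n)) ->
     (forall m n x, m <> n -> A m x -> A n x -> False) ->
     Rbar_series (fun n => mu (A n)) (mu (fun x => exists n, A n x))).

Definition balls_pos_fin (mu : (X -> Prop) -> Rbar) : Prop :=
  forall x r, 0 < r -> exists v, mu (ball x r) = Finite v /\ 0 < v.

Definition doubling (mu : (X -> Prop) -> Rbar) : Prop :=
  exists Cd, forall x r, 0 < r -> Rbar_le (mu (ball x (2 * r))) (Finite (Cd * real (mu (ball x r)))).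

Definition nbhd (E : X -> Prop) (r : R) : X -> Prop :=
  fun x => exists y, E y /\ d x y < r.

(** R < diam(E) (diam E = sup of distances, possibly infinite). *)
Definition lt_diam (R0 : R) (E : X -> Prop) : Prop :=
  exists x y, E x /\ E y /\ R0 < d x y.

(** Upper Assouad codimension: the set of admissible exponents s. *)
Definition assouad_exps (mu : (X -> Prop) -> Rbar) (E : X -> Prop) : R -> Prop :=
  fun s => 0 <= s /\ exists c, 0 < c /\
    forall x r R0, E x -> 0 < r -> r < R0 -> lt_diam R0 E ->
      (* mu(E_r ∩ B(x,R)) / mu(B(x,R)) >= c (r/R)^s, with 0 < mu(B(x,R)) < oo *)
      Rbar_le (Finite (c * Rpower (r / R0) s * real (mu (ball x R0))))
              (mu (fun y => nbhd E r y /\ ball x R0 y)).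

(** Value of a countable (possibly finite) cover by balls: [None] entries
    are unused indices.  Sum of rad(B_k)^(-q) mu(B_k). *)
Definition cover_term (mu : (X -> Prop) -> Rbar) (q : R) (b : option (X * R)) : Rbar :=
  match b with
  | None => Finite 0
  | Some (x, r) => Finite (Rpower r (- q) * real (mu (ball x r)))
  end.

Definition admissible_cover (A : X -> Prop) (R0 : R) (b : nat -> option (X * R)) : Prop :=
  (forall k x r, b k = Some (x, r) -> 0 < r /\ r <= R0) /\
  (forall y, A y -> exists k x r, b k = Some (x, r) /\ ball x r y).

(** [hcontent_ge mu q R0 A v]:  H^{mu,q}_{R0}(A) >= v, i.e. v is a lower bound
    of the sums over all admissible covers (divergent sums are +infinity). *)
Definition hcontent_ge (mu : (X -> Prop) -> Rbar) (q R0 : R) (A : X -> Prop) (v : R) : Prop :=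
  forall b S, admissible_cover A R0 b -> Rbar_series (fun k => cover_term mu q (b k)) S ->
    Rbar_le (Finite v) S.

Definition content_exps (mu : (X -> Prop) -> Rbar) (E : X -> Prop) : R -> Prop :=
  fun q => 0 <= q /\ exists C, 0 < C /\
    forall w R0, E w -> 0 < R0 -> lt_diam R0 E ->
      hcontent_ge mu q R0 (fun y => E y /\ ball w R0 y)
                  (C * Rpower R0 (- q) * real (mu (ball w R0))).

End Metric.

Definition is_glb (P : R -> Prop) (m : R) : Prop :=
  (forall x, P x -> m <= x) /\ (forall m', (forall x, P x -> m' <= x) -> m' <= m).

(* Every content exponent is an Assouad exponent, and every q strictly above an Assouad exponent s
   is a content exponent; hence both sets have the same infimum.

   Content to Assouad: the balls of radius r/2 around an (r/2)-net of E ∩ B(x, R/2) cover it, so the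
   content bound controls the sum of their masses, and by doubling this is comparable to the mass of
   the disjoint balls of radius r/4, which lie in E_r ∩ B(x, R).

   Assouad to content: by completeness and closedness of E it suffices to bound the weight of finite
   covers, which is done by induction on the number of scales R/lam^t spanned by the radii.  By
   Assouad's condition the mass of B(w, R) is dominated by lam^s times the mass of the balls
   B(c, R/lam) around an (R/lam)-net of E ∩ B(w, R/2).  Each such ball is paid for either by the small
   balls of the cover near c (induction at scale R/lam, gaining lam^(-q)) or by a large ball of the
   cover (doubling).  Since q > s, for lam large the gain beats the loss. *)

From Stdlib Require Import Reals Lra Lia List Classical ClassicalEpsilon FunctionalExtensionality PropExtensionality.
Open Scope R_scope.

Lemma set_ext {T} (A B : T -> Prop) : (forall x, A x <-> B x) -> A = B.
Proof. intro H; apply functional_extensionality; intro x; apply propositional_extensionality; auto. Qed.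

Definition decide (P : Prop) : bool := if excluded_middle_informative P then true else false.

Lemma decide_elim P : decide P = true -> P.
Proof. unfold decide; destruct (excluded_middle_informative P); auto; discriminate. Qed.

Lemma decide_intro P : P -> decide P = true.
Proof. unfold decide; destruct (excluded_middle_informative P); auto; contradiction. Qed.

Lemma Rpower_pos x y : 0 < Rpower x y.
Proof. apply exp_pos. Qed.

Lemma Rpower_inv x y : 0 < x -> Rpower (/ x) y = Rpower x (- y).
Proof. intro; unfold Rpower; rewrite ln_Rinv by auto; f_equal; ring. Qed.

Lemma Rpower_div a b y : 0 < a -> 0 < b -> Rpower (a / b) y = Rpower a y * Rpower b (- y).
Proof.
  intros. unfold Rdiv. rewrite <- Rpower_mult_distr, Rpower_inv; auto.
  apply Rinv_0_lt_compat; auto.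
Qed.

Lemma Rpower_mul_opp x y : Rpower x y * Rpower x (- y) = 1.
Proof. rewrite <- Rpower_plus, Rplus_opp_r; unfold Rpower; rewrite Rmult_0_l; apply exp_0. Qed.

Lemma Rpower_opp_antitone r r' q : 0 < r -> r <= r' -> 0 <= q -> Rpower r' (- q) <= Rpower r (- q).
Proof.
  intros. rewrite !Rpower_Ropp. apply Rinv_le_contravar; [apply Rpower_pos|].
  apply Rle_Rpower_l; auto; lra.
Qed.

Lemma Rpower_le_1 x q : 0 < x <= 1 -> 0 <= q -> Rpower x q <= 1.
Proof.
  intros. replace 1 with (Rpower 1 q) by (unfold Rpower; rewrite ln_1, Rmult_0_r; apply exp_0).
  apply Rle_Rpower_l; lra.
Qed.

Lemma pow_unbounded (b : R) K : 2 <= b -> exists m : nat, K <= b ^ m.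
Proof.
  intro Hb. destruct (INR_unbounded K) as [n Hn]. exists n.
  enough (INR n <= b ^ n) by lra. clear Hn. induction n; [simpl; lra|].
  rewrite S_INR; simpl. assert (1 <= b ^ n) by (apply pow_R1_Rle; lra). nra.
Qed.

Lemma exists_max_nat (Q : nat -> Prop) N : (forall n, Q n -> (n <= N)%nat) -> Q 0%nat ->
  exists n, Q n /\ forall k, Q k -> (k <= n)%nat.
Proof.
  revert Q; induction N; intros Q HN H0.
  - exists 0%nat; split; auto.
  - destruct (classic (Q (S N))) as [HS|HS]; [exists (S N); auto|].
    apply IHN; auto. intros n Hn. specialize (HN n Hn).
    destruct (Nat.eq_dec n (S N)); subst; [contradiction|lia].
Qed.

Lemma dependent_choice_nat {A} (I : nat -> A -> Prop) (Rel : nat -> A -> A -> Prop) a0 :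
  I 0%nat a0 -> (forall n a, I n a -> exists b, I (S n) b /\ Rel n a b) ->
  exists f : nat -> A, forall n, I n (f n) /\ Rel n (f n) (f (S n)).
Proof.
  intros H0 Hstep.
  assert (Hg : forall p : nat * A, exists b, I (fst p) (snd p) -> I (S (fst p)) b /\ Rel (fst p) (snd p) b).
  { intros [n a]. destruct (classic (I n a)) as [Ha|Ha].
    - destruct (Hstep n a Ha) as [b Hb]. exists b; auto.
    - exists a; intro; contradiction. }
  set (g := fun p => proj1_sig (constructive_indefinite_description _ (Hg p))).
  assert (Hgs : forall n a, I n a -> I (S n) (g (n, a)) /\ Rel n a (g (n, a))).
  { intros n a Ha. unfold g. destruct (constructive_indefinite_description _ (Hg (n, a))); simpl in *; auto. }
  set (f := fix f n := match n with 0%nat => a0 | S n => g (n, f n) end).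
  assert (Hf : forall n, I n (f n)) by (induction n; simpl; [|apply Hgs]; auto).
  exists f. intro n. split; [apply Hf|]. apply (Hgs n (f n) (Hf n)).
Qed.

Fixpoint lsum {T} (f : T -> R) (l : list T) : R :=
  match l with nil => 0 | a :: l' => f a + lsum f l' end.

Section Lists.
Context {T : Type}.

Lemma lsum_ext (f g : T -> R) l : (forall x, In x l -> f x = g x) -> lsum f l = lsum g l.
Proof. induction l; simpl; intros; auto. rewrite H, IHl; auto. Qed.

Lemma lsum_nonneg (f : T -> R) l : (forall t, In t l -> 0 <= f t) -> 0 <= lsum f l.
Proof. induction l; simpl; intros; [lra|]. assert (0 <= f a) by auto. assert (0 <= lsum f l) by auto. lra. Qed.

Lemma lsum_le (f g : T -> R) l : (forall t, In t l -> f t <= g t) -> lsum f l <= lsum g l.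
Proof. induction l; simpl; intros; [lra|]. assert (f a <= g a) by auto. assert (lsum f l <= lsum g l) by auto. lra. Qed.

Lemma lsum_plus (f g : T -> R) l : lsum (fun t => f t + g t) l = lsum f l + lsum g l.
Proof. induction l; simpl; lra. Qed.

Lemma lsum_scal (f : T -> R) c l : lsum (fun t => c * f t) l = c * lsum f l.
Proof. induction l; simpl; lra. Qed.

Lemma lsum_const (K : R) (l : list T) : lsum (fun _ => K) l = INR (length l) * K.
Proof. induction l; simpl; [lra|]. rewrite IHl. destruct (length l); simpl; lra. Qed.

Lemma lsum_app (f : T -> R) l1 l2 : lsum f (l1 ++ l2) = lsum f l1 + lsum f l2.
Proof. induction l1; simpl; lra. Qed.

Lemma lsum_ge_term (f : T -> R) l a : (forall t, In t l -> 0 <= f t) -> In a l -> f a <= lsum f l.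
Proof.
  induction l; simpl; intros Hn Ha; [contradiction|].
  destruct Ha as [->|Ha].
  - assert (0 <= lsum f l) by (apply lsum_nonneg; auto). lra.
  - assert (0 <= f a0) by auto. assert (f a <= lsum f l) by auto. lra.
Qed.

Lemma lsum_filter (p : T -> bool) (g : T -> R) l :
  lsum g (filter p l) = lsum (fun x => if p x then g x else 0) l.
Proof. induction l; simpl; auto. destruct (p a); simpl; lra. Qed.

Lemma lsum_indicator (p : T -> bool) l : lsum (fun x => if p x then 1 else 0) l = INR (length (filter p l)).
Proof. induction l; simpl; auto. rewrite IHl. destruct (p a); simpl length; [rewrite S_INR|]; lra. Qed.

Lemma lsum_swap {U} (f : T -> U -> R) l1 l2 :
  lsum (fun t => lsum (f t) l2) l1 = lsum (fun u => lsum (fun t => f t u) l1) l2.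
Proof.
  induction l1; simpl.
  - induction l2; simpl; lra.
  - rewrite IHl1. clear IHl1. induction l2; simpl; lra.
Qed.

Lemma sum_f_R0_nth_error (G : option T -> R) (P : list T) : G None = 0 ->
  forall n, (length P <= S n)%nat -> sum_f_R0 (fun k => G (nth_error P k)) n = lsum (fun p => G (Some p)) P.
Proof.
  intro H0. induction P as [|a P IH]; intros n Hn.
  - rewrite (sum_eq _ (fun _ => G None)) by (intros i _; destruct i; reflexivity).
    rewrite H0. simpl. clear Hn. induction n; simpl; lra.
  - destruct n.
    + simpl in Hn. destruct P; simpl in Hn; [|lia]. simpl. lra.
    + rewrite decomp_sum by lia. simpl pred. simpl nth_error at 1. simpl lsum.
      rewrite (sum_eq _ (fun k => G (nth_error P k))) by (intros; reflexivity).
      rewrite IH; auto. simpl in Hn; lia.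
Qed.

Lemma exists_uniform_nat (P : list T) (Q : T -> nat -> Prop) :
  (forall p N N', (N <= N')%nat -> Q p N -> Q p N') -> (forall p, In p P -> exists N, Q p N) ->
  exists N, forall p, In p P -> Q p N.
Proof.
  intros Hmono. induction P as [|a P IH]; intros H.
  - exists 0%nat; intros p [].
  - destruct (H a (or_introl eq_refl)) as [Na Ha]. destruct IH as [Np Hp].
    { intros; apply H; simpl; auto. }
    exists (Nat.max Na Np). intros p [<-|Hin].
    + apply Hmono with Na; auto; lia.
    + apply Hmono with Np; auto; lia.
Qed.

Lemma exists_pos_lower_bound (L : list (T * R)) : (forall p, In p L -> 0 < snd p) ->
  exists m, 0 < m /\ forall p, In p L -> m <= snd p.
Proof.
  induction L as [|a L IH]; intro H.
  - exists 1; split; [lra|intros p []].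
  - destruct IH as [m [Hm Hm']]. { intros; apply H; simpl; auto. }
    exists (Rmin m (snd a)). split. { apply Rmin_glb_lt; auto. apply H; simpl; auto. }
    intros p [<-|Hp]; [apply Rmin_r|]. eapply Rle_trans; [apply Rmin_l|auto].
Qed.

End Lists.



(** * Measures of sets inside balls *)

Section MetricMeasure.
Variable X : Type.
Variable d : X -> X -> R.
Variable mu : (X -> Prop) -> Rbar.
Hypothesis Hd : is_metric X d.
Hypothesis Hmu : is_borel_measure X d mu.
Hypothesis Hball : balls_pos_fin X d mu.

Lemma dist_sym x y : d x y = d y x. Proof. apply Hd. Qed.
Lemma dist_triangle x y z : d x z <= d x y + d y z. Proof. apply Hd. Qed.
Lemma dist_refl x : d x x = 0. Proof. apply Hd; auto. Qed.

Definition subset (A B : X -> Prop) := forall y, A y -> B y.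

Lemma ball_subset x y r r' : d y x + r <= r' -> subset (ball X d x r) (ball X d y r').
Proof. intros H z Hz. unfold ball in *. pose proof (dist_triangle y x z). lra. Qed.

Lemma borel_ext A B : borel X d A -> (forall x, A x <-> B x) -> borel X d B.
Proof. intros HA H; rewrite <- (set_ext A B H); auto. Qed.

Lemma borel_empty : borel X d (fun _ => False).
Proof. apply borel_open. intros x []. Qed.

Lemma borel_or A B : borel X d A -> borel X d B -> borel X d (fun x => A x \/ B x).
Proof.
  intros HA HB.
  apply borel_ext with (fun x => exists n, (match n with 0%nat => A | _ => B end) x).
  - apply borel_union. intros [|n]; auto.
  - intro x; split; [intros [[|n] H]; auto|].
    intros [H|H]; [exists 0%nat|exists 1%nat]; auto.
Qed.

Lemma borel_and A B : borel X d A -> borel X d B -> borel X d (fun x => A x /\ B x).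
Proof.
  intros HA HB. apply borel_ext with (fun x => ~ (~ A x \/ ~ B x)).
  - apply borel_compl, borel_or; apply borel_compl; auto.
  - intro x; split; [intro H; split; apply NNPP; tauto | tauto].
Qed.

Lemma borel_diff A B : borel X d A -> borel X d B -> borel X d (fun x => A x /\ ~ B x).
Proof. intros; apply borel_and, borel_compl; auto. Qed.

Lemma borel_ball x r : borel X d (ball X d x r).
Proof.
  apply borel_ext with (fun y => ~ ~ ball X d x r y).
  - apply borel_compl, borel_open. intros y Hy. unfold ball in Hy.
    exists (d x y - r). split; [lra|]. intros z Hz. unfold ball.
    pose proof (dist_triangle x z y). rewrite (dist_sym z y) in H. lra.
  - intro; split; [apply NNPP | tauto].
Qed.

Lemma borel_nbhd E r : borel X d (nbhd X d E r).
Proof.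
  apply borel_open. intros y [e [He Hye]].
  exists (r - d y e). split; [lra|]. intros z Hz. exists e; split; auto.
  pose proof (dist_triangle z y e). rewrite (dist_sym z y) in H. lra.
Qed.

Lemma measure_empty : mu (fun _ => False) = Finite 0. Proof. apply Hmu. Qed.

Lemma measure_nonneg A : borel X d A -> Rbar_le (Finite 0) (mu A).
Proof. apply Hmu. Qed.

Definition pair_seq (A B : X -> Prop) (n : nat) : X -> Prop :=
  match n with 0%nat => A | 1%nat => B | _ => fun _ => False end.

Lemma measure_union2_series A B : borel X d A -> borel X d B -> (forall x, A x -> B x -> False) ->
  Rbar_series (fun n => mu (pair_seq A B n)) (mu (fun x => A x \/ B x)).
Proof.
  intros HA HB Hdis.
  replace (fun x => A x \/ B x) with (fun x => exists n, pair_seq A B n x).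
  - apply Hmu.
    + intros [|[|n]]; simpl; auto using borel_empty.
    + intros [|[|m]] [|[|n]] x Hmn; simpl; try tauto; intros; eapply Hdis; eauto.
  - apply set_ext; intro x; split.
    + intros [[|[|n]] H]; simpl in H; tauto.
    + intros [H|H]; [exists 0%nat|exists 1%nat]; auto.
Qed.

Lemma infinite_sum_two_terms (g : nat -> R) a b :
  g 0%nat = a -> g 1%nat = b -> (forall n, g (S (S n)) = 0) -> infinite_sum g (a + b).
Proof.
  intros H0 H1 H2 eps Heps. exists 1%nat. intros n Hn.
  assert (Hs : forall k, sum_f_R0 g (S k) = a + b).
  { induction k; simpl in *; [lra|]. rewrite H2. lra. }
  destruct n; [lia|]. rewrite Hs. unfold Rdist. rewrite Rminus_diag, Rabs_R0. auto.
Qed.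

Lemma measure_union2 A B a b : borel X d A -> borel X d B -> (forall x, A x -> B x -> False) ->
  mu A = Finite a -> mu B = Finite b -> mu (fun x => A x \/ B x) = Finite (a + b).
Proof.
  intros HA HB Hdis Ha Hb.
  assert (Hcv : infinite_sum (fun n => real (mu (pair_seq A B n))) (a + b)).
  { apply infinite_sum_two_terms; simpl; [rewrite Ha|rewrite Hb|intro; rewrite measure_empty]; reflexivity. }
  destruct (measure_union2_series A B HA HB Hdis) as [[l [Hl [_ Hl']]] | [Hv [[n Hn] | [_ Hn]]]].
  - rewrite Hl. f_equal. eapply uniqueness_sum; eauto.
  - destruct n as [|[|n]]; simpl in Hn; try rewrite measure_empty in Hn; congruence.
  - exfalso; eauto.
Qed.

Lemma measure_union2_infty A B : borel X d A -> borel X d B -> (forall x, A x -> B x -> False) ->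
  mu A = p_infty -> mu (fun x => A x \/ B x) = p_infty.
Proof.
  intros HA HB Hdis Ha.
  destruct (measure_union2_series A B HA HB Hdis) as [[l [Hl [Hf _]]] | [Hv _]]; auto.
  specialize (Hf 0%nat); simpl in Hf; rewrite Ha in Hf; discriminate.
Qed.

Lemma measure_mono_finite A B b : borel X d A -> borel X d B -> subset A B -> mu B = Finite b ->
  exists a, mu A = Finite a /\ 0 <= a /\ a <= b.
Proof.
  intros HA HB Hsub HBb.
  assert (HBeq : B = (fun x => A x \/ (B x /\ ~ A x))).
  { apply set_ext; intro x; specialize (Hsub x). destruct (classic (A x)); tauto. }
  assert (HD : borel X d (fun x => B x /\ ~ A x)) by (apply borel_diff; auto).
  assert (Hdis : forall x, A x -> (B x /\ ~ A x) -> False) by tauto.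
  pose proof (measure_nonneg A HA) as HnA. pose proof (measure_nonneg _ HD) as HnD.
  rewrite HBeq in HBb. destruct (mu A) as [a|] eqn:Ea.
  - destruct (mu (fun x => B x /\ ~ A x)) as [c|] eqn:Ec.
    + rewrite (measure_union2 _ _ a c HA HD Hdis Ea Ec) in HBb.
      inversion HBb. simpl in *. exists a; repeat split; lra.
    + exfalso. assert (Hinf : mu (fun x => (B x /\ ~ A x) \/ A x) = p_infty)
        by (apply measure_union2_infty; auto; tauto).
      replace (fun x => (B x /\ ~ A x) \/ A x) with (fun x => A x \/ (B x /\ ~ A x)) in Hinf
        by (apply set_ext; intro; tauto).
      congruence.
  - rewrite (measure_union2_infty _ _ HA HD Hdis Ea) in HBb. discriminate.
Qed.

Definition mball x r := real (mu (ball X d x r)).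

Lemma mball_spec x r : 0 < r -> mu (ball X d x r) = Finite (mball x r) /\ 0 < mball x r.
Proof. intro H; destruct (Hball x r H) as [v [Hv Hv']]. unfold mball; rewrite Hv; auto. Qed.

Lemma mball_pos x r : 0 < r -> 0 < mball x r.
Proof. intro; apply mball_spec; auto. Qed.

Lemma measure_in_ball A x r : borel X d A -> subset A (ball X d x r) -> 0 < r ->
  mu A = Finite (real (mu A)) /\ 0 <= real (mu A) /\ real (mu A) <= mball x r.
Proof.
  intros HA Hs Hr. destruct (mball_spec x r Hr) as [H1 H2].
  destruct (measure_mono_finite _ _ _ HA (borel_ball x r) Hs H1) as [a [Ha [Ha1 Ha2]]].
  rewrite Ha; simpl; auto.
Qed.

Lemma measure_mono A B x r : borel X d A -> borel X d B -> subset A B -> subset B (ball X d x r) -> 0 < r ->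
  real (mu A) <= real (mu B).
Proof.
  intros HA HB Hs HB' Hr. destruct (measure_in_ball B x r HB HB' Hr) as [H1 _].
  destruct (measure_mono_finite _ _ _ HA HB Hs H1) as [a [Ha [_ Ha2]]]. rewrite Ha; simpl; auto.
Qed.

Lemma mball_subset x r y r' : 0 < r -> 0 < r' -> subset (ball X d x r) (ball X d y r') -> mball x r <= mball y r'.
Proof. intros. apply measure_mono with y r'; auto using borel_ball. intros z Hz; auto. Qed.

Lemma measure_union2_in_ball A B x r : borel X d A -> borel X d B -> (forall y, A y -> B y -> False) ->
  subset A (ball X d x r) -> subset B (ball X d x r) -> 0 < r ->
  real (mu (fun y => A y \/ B y)) = real (mu A) + real (mu B).
Proof.
  intros HA HB Hdis H1 H2 Hr.
  destruct (measure_in_ball A x r HA H1 Hr) as [E1 _]. destruct (measure_in_ball B x r HB H2 Hr) as [E2 _].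
  rewrite (measure_union2 _ _ _ _ HA HB Hdis E1 E2). reflexivity.
Qed.

Lemma measure_union2_le A B x r : borel X d A -> borel X d B ->
  subset A (ball X d x r) -> subset B (ball X d x r) -> 0 < r ->
  real (mu (fun y => A y \/ B y)) <= real (mu A) + real (mu B).
Proof.
  intros HA HB H1 H2 Hr.
  replace (fun y => A y \/ B y) with (fun y => A y \/ (B y /\ ~ A y))
    by (apply set_ext; intro y; destruct (classic (A y)); tauto).
  assert (HD : borel X d (fun y => B y /\ ~ A y)) by (apply borel_diff; auto).
  rewrite (measure_union2_in_ball A _ x r); auto; [|tauto|intros y [? ?]; auto].
  enough (real (mu (fun y => B y /\ ~ A y)) <= real (mu B)) by lra.
  apply measure_mono with x r; auto. intros y [? ?]; auto.
Qed.

Definition union_list {T} (F : T -> X -> Prop) (l : list T) : X -> Prop :=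
  fun y => exists t, In t l /\ F t y.

Lemma union_list_nil {T} (F : T -> X -> Prop) : union_list F nil = (fun _ => False).
Proof. apply set_ext; intro y; split; [intros [t [[] _]] | intros []]. Qed.

Lemma union_list_cons {T} (F : T -> X -> Prop) a l :
  union_list F (a :: l) = (fun y => F a y \/ union_list F l y).
Proof.
  apply set_ext; intro y; split.
  - intros [t [[<-|Ht] Hy]]; [left; auto | right; exists t; auto].
  - intros [H|[t [Ht Hy]]]; [exists a | exists t]; simpl; auto.
Qed.

Lemma borel_union_list {T} (F : T -> X -> Prop) l :
  (forall t, In t l -> borel X d (F t)) -> borel X d (union_list F l).
Proof.
  induction l as [|a l IH]; intro H.
  - rewrite union_list_nil; apply borel_empty.
  - rewrite union_list_cons; apply borel_or; [apply H; simpl; auto|].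
    apply IH; intros; apply H; simpl; auto.
Qed.

Lemma measure_union_list_le {T} (F : T -> X -> Prop) l x r : 0 < r ->
  (forall t, In t l -> borel X d (F t)) -> (forall t, In t l -> subset (F t) (ball X d x r)) ->
  real (mu (union_list F l)) <= lsum (fun t => real (mu (F t))) l.
Proof.
  intros Hr. induction l as [|a l IH]; intros HB HS.
  - rewrite union_list_nil, measure_empty. simpl; lra.
  - rewrite union_list_cons. simpl.
    assert (Hl : real (mu (union_list F l)) <= lsum (fun t => real (mu (F t))) l)
      by (apply IH; intros; [apply HB|apply HS]; simpl; auto).
    eapply Rle_trans; [apply measure_union2_le with x r|lra]; auto.
    + apply HB; simpl; auto.
    + apply borel_union_list; intros; apply HB; simpl; auto.
    + apply HS; simpl; auto.
    + intros y [t [Ht Hy]]. apply (HS t); simpl; auto.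
Qed.

Fixpoint pairwise_disjoint {T} (F : T -> X -> Prop) (l : list T) : Prop :=
  match l with
  | nil => True
  | a :: l' => (forall b, In b l' -> forall y, F a y -> F b y -> False) /\ pairwise_disjoint F l'
  end.

Lemma measure_union_list_disjoint {T} (F : T -> X -> Prop) l x r : 0 < r ->
  (forall t, In t l -> borel X d (F t)) -> (forall t, In t l -> subset (F t) (ball X d x r)) ->
  pairwise_disjoint F l -> real (mu (union_list F l)) = lsum (fun t => real (mu (F t))) l.
Proof.
  intros Hr. induction l as [|a l IH]; intros HB HS HP.
  - rewrite union_list_nil, measure_empty. reflexivity.
  - destruct HP as [HP1 HP2]. rewrite union_list_cons. simpl. rewrite (measure_union2_in_ball _ _ x r).
    + rewrite IH; auto; intros; [apply HB|apply HS]; simpl; auto.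
    + apply HB; simpl; auto.
    + apply borel_union_list; intros; apply HB; simpl; auto.
    + intros y Hy [t [Ht Hy']]. eapply HP1; eauto.
    + apply HS; simpl; auto.
    + intros y [t [Ht Hy]]. apply (HS t); simpl; auto.
    + auto.
Qed.

(** * Doubling and packing *)

Fixpoint separated (delta : R) (l : list X) : Prop :=
  match l with nil => True | p :: l' => (forall q, In q l' -> delta < d p q) /\ separated delta l' end.

Lemma separated_disjoint delta l : separated delta l -> pairwise_disjoint (fun c => ball X d c (delta / 2)) l.
Proof.
  induction l; simpl; auto. intros [H1 H2]. split; auto.
  intros b Hb y Hy Hy'. unfold ball in *. specialize (H1 b Hb).
  pose proof (dist_triangle a y b). rewrite (dist_sym y b) in H. lra.
Qed.

Lemma separated_filter delta (p : X -> bool) l : separated delta l -> separated delta (filter p l).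
Proof.
  induction l; simpl; auto. intros [H1 H2]. destruct (p a); simpl; auto.
  split; auto. intros q Hq. apply filter_In in Hq. apply H1; tauto.
Qed.

Lemma separated_mass_le delta l x D : 0 < delta -> 0 <= D -> separated delta l ->
  (forall c, In c l -> d x c <= D) ->
  lsum (fun c => mball c (delta / 2)) l <= mball x (D + delta / 2).
Proof.
  intros Hdl HD Hs Hin.
  assert (Hsub : forall c, In c l -> subset (ball X d c (delta / 2)) (ball X d x (D + delta / 2))).
  { intros c Hc. apply ball_subset. specialize (Hin c Hc). lra. }
  unfold mball at 1.
  rewrite <- (measure_union_list_disjoint (fun c => ball X d c (delta / 2)) l x (D + delta / 2));
    auto using borel_ball, separated_disjoint; try lra.
  apply measure_mono with x (D + delta / 2); auto using borel_ball, borel_union_list; try lra.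
  - intros y [t [Ht Hy]]. eapply Hsub; eauto.
  - intros y Hy; auto.
Qed.

Section Doubling.
Variable Cd : R.
Hypothesis HCd1 : 1 <= Cd.
Hypothesis HCd : forall x r, 0 < r -> mball x (2 * r) <= Cd * mball x r.

Lemma mball_pow2 x r m : 0 < r -> mball x (2 ^ m * r) <= Cd ^ m * mball x r.
Proof.
  intro Hr. induction m; simpl; [rewrite Rmult_1_l; lra|].
  rewrite Rmult_assoc. eapply Rle_trans; [apply HCd|].
  - assert (0 < 2 ^ m) by (apply pow_lt; lra). nra.
  - rewrite Rmult_assoc. apply Rmult_le_compat_l; lra.
Qed.

Lemma mball_le_doubling x r y r' m : 0 < r -> 0 < r' -> d y x + r <= 2 ^ m * r' ->
  mball x r <= Cd ^ m * mball y r'.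
Proof.
  intros H1 H2 H3. assert (0 < 2 ^ m) by (apply pow_lt; lra).
  eapply Rle_trans; [apply (mball_subset x r y (2 ^ m * r')); auto|apply mball_pow2; auto].
  - nra.
  - apply ball_subset; auto.
Qed.

Lemma separated_length_le delta l x D m : 0 < delta -> 0 <= D -> separated delta l ->
  (forall c, In c l -> d x c <= D) ->
  D + (D + delta / 2) <= 2 ^ m * (delta / 2) -> INR (length l) <= Cd ^ m.
Proof.
  intros Hdl HD Hs Hin Hm.
  pose proof (separated_mass_le delta l x D Hdl HD Hs Hin) as H1.
  assert (H2 : lsum (fun c => mball x (D + delta / 2)) l <= lsum (fun c => Cd ^ m * mball c (delta / 2)) l).
  { apply lsum_le. intros c Hc. apply mball_le_doubling; try lra.
    rewrite dist_sym. specialize (Hin c Hc). lra. }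
  rewrite lsum_scal, lsum_const in H2.
  assert (0 < mball x (D + delta / 2)) by (apply mball_pos; lra).
  assert (0 < Cd ^ m) by (apply pow_lt; lra).
  apply Rmult_le_reg_r with (mball x (D + delta / 2)); auto. nra.
Qed.

(* A maximal [delta]-separated subset is a [delta]-net; it is finite because, by doubling,
   separated subsets of a bounded set have bounded cardinality. *)
Lemma exists_separated_net (A : X -> Prop) z rho delta : 0 < delta -> 0 <= rho ->
  (forall y, A y -> d z y <= rho) ->
  exists P, separated delta P /\ (forall c, In c P -> A c) /\
            (forall y, A y -> exists c, In c P /\ d c y <= delta).
Proof.
  intros Hdl Hr HA.
  destruct (pow_unbounded 2 ((rho + (rho + delta / 2)) / (delta / 2)) (Rle_refl _)) as [m Hm].
  assert (Hm' : rho + (rho + delta / 2) <= 2 ^ m * (delta / 2)).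
  { apply Rmult_le_compat_r with (r := delta / 2) in Hm; [|lra].
    unfold Rdiv in Hm at 1. rewrite Rmult_assoc, Rinv_l, Rmult_1_r in Hm; lra. }
  destruct (INR_unbounded (Cd ^ m)) as [N HN].
  set (Q := fun n => exists P, separated delta P /\ (forall c, In c P -> A c) /\ length P = n).
  destruct (exists_max_nat Q N) as [n [[P [HP1 [HP2 HP3]]] Hmax]].
  - intros n [P [HP1 [HP2 HP3]]]. subst n.
    pose proof (separated_length_le delta P z rho m Hdl Hr HP1 (fun c Hc => HA c (HP2 c Hc)) Hm').
    assert (INR (length P) < INR N) by lra. apply INR_lt in H0; lia.
  - exists nil; simpl; repeat split; auto. intros c [].
  - exists P; repeat split; auto.
    intros y Hy. apply NNPP; intro Hn.
    assert (HQ : Q (S n)).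
    { exists (y :: P). simpl; repeat split; auto.
      - intros q Hq. apply Rnot_le_lt. intro Hle. apply Hn. exists q; split; auto. rewrite dist_sym; auto.
      - intros c [<-|Hc]; auto. }
    specialize (Hmax _ HQ). lia.
Qed.

(** * Content exponents are Assouad exponents *)

Section ContentToAssouad.
Variable E : X -> Prop.
Variables q C1 : R.
Hypothesis Hq : 0 <= q.
Hypothesis HC1 : 0 < C1.
Hypothesis Hcontent : forall w R0, E w -> 0 < R0 -> lt_diam X d R0 E ->
  hcontent_ge X d mu q R0 (fun y => E y /\ ball X d w R0 y) (C1 * Rpower R0 (- q) * mball w R0).

Definition net_cover (P : list X) (r : R) (k : nat) : option (X * R) :=
  match nth_error P k with Some p => Some (p, r) | None => None end.

Lemma net_cover_series P r : Rbar_series (fun k => cover_term X d mu q (net_cover P r k))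
  (Finite (lsum (fun p => Rpower r (- q) * mball p r) P)).
Proof.
  set (G := fun o : option X => match o with Some p => Rpower r (- q) * mball p r | None => 0 end).
  left. exists (lsum (fun p => G (Some p)) P). split; [reflexivity|]. split.
  - intro n. unfold net_cover. destruct (nth_error P n); reflexivity.
  - intros eps He. exists (length P). intros n Hn.
    rewrite (sum_eq _ (fun k => G (nth_error P k))).
    + rewrite (sum_f_R0_nth_error G P eq_refl n) by lia. unfold Rdist. rewrite Rminus_diag, Rabs_R0; auto.
    + intros i _. unfold net_cover, G. destruct (nth_error P i); reflexivity.
Qed.

Lemma lt_diam_mono R1 R2 : R1 <= R2 -> lt_diam X d R2 E -> lt_diam X d R1 E.
Proof. intros H [x [y [H1 [H2 H3]]]]. exists x, y; repeat split; auto; lra. Qed.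

Definition nbhd_in_ball r x R0 := fun y => nbhd X d E r y /\ ball X d x R0 y.

Lemma borel_nbhd_in_ball r x R0 : borel X d (nbhd_in_ball r x R0).
Proof. apply borel_and; [apply borel_nbhd|apply borel_ball]. Qed.

Lemma nbhd_in_ball_finite r x R0 : 0 < R0 ->
  mu (nbhd_in_ball r x R0) = Finite (real (mu (nbhd_in_ball r x R0))).
Proof. intro. apply (measure_in_ball _ x R0); auto using borel_nbhd_in_ball. intros y [_ Hy]; auto. Qed.

Lemma nbhd_in_ball_ge_mball r x R0 : 0 < r -> r <= R0 -> E x ->
  mball x (r / 2) <= real (mu (nbhd_in_ball r x R0)).
Proof.
  intros Hr HrR Hx. apply measure_mono with x R0; auto using borel_ball, borel_nbhd_in_ball; try lra.
  - intros y Hy. unfold ball in Hy. split; [exists x; split; auto; rewrite dist_sym; lra | unfold ball; lra].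
  - intros y [_ Hy]; auto.
Qed.

Lemma nbhd_in_ball_ge_net r x R0 P : 0 < r -> 0 < R0 -> separated (r / 2) P ->
  (forall p, In p P -> E p /\ d x p + r / 4 <= R0) ->
  lsum (fun p => mball p (r / 4)) P <= real (mu (nbhd_in_ball r x R0)).
Proof.
  intros Hr HR0 HP HPin.
  replace (r / 4) with (r / 2 / 2) by field. unfold mball.
  rewrite <- (measure_union_list_disjoint _ P x R0); auto using borel_ball, separated_disjoint.
  - apply measure_mono with x R0; auto using borel_union_list, borel_ball, borel_nbhd_in_ball.
    + intros y [p [Hp Hy]]. destruct (HPin p Hp) as [Hep Hxp]. unfold ball in Hy. split.
      * exists p; split; auto. rewrite dist_sym. lra.
      * unfold ball. pose proof (dist_triangle x p y). lra.
    + intros y [_ Hy]; auto.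
  - intros p Hp. apply ball_subset. destruct (HPin p Hp). lra.
Qed.

Lemma assouad_bound_large_scale x r R0 : E x -> 0 < r -> r <= R0 -> R0 <= 4 * r ->
  1 / Cd ^ 3 * Rpower (r / R0) q * mball x R0 <= real (mu (nbhd_in_ball r x R0)).
Proof.
  intros Hx Hr HrR Hbig.
  assert (H1 := nbhd_in_ball_ge_mball r x R0 Hr HrR Hx).
  assert (H2 : mball x R0 <= Cd ^ 3 * mball x (r / 2)).
  { apply mball_le_doubling; try lra. rewrite dist_refl. simpl. lra. }
  assert (H3 : Rpower (r / R0) q <= 1).
  { apply Rpower_le_1; auto. split; [apply Rdiv_lt_0_compat; lra|].
    apply Rmult_le_reg_r with R0; [lra|]. unfold Rdiv; rewrite Rmult_assoc, Rinv_l; lra. }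
  assert (HCd3 : 0 < Cd ^ 3) by (apply pow_lt; lra).
  assert (0 < mball x R0) by (apply mball_pos; lra).
  pose proof (Rpower_pos (r / R0) q).
  apply Rle_trans with (1 / Cd ^ 3 * 1 * (Cd ^ 3 * mball x (r / 2))).
  - assert (0 < 1 / Cd ^ 3) by (apply Rdiv_lt_0_compat; lra).
    apply Rmult_le_compat; nra.
  - replace (1 / Cd ^ 3 * 1 * (Cd ^ 3 * mball x (r / 2))) with (mball x (r / 2)) by (field; lra). lra.
Qed.

Lemma assouad_bound_small_scale x r R0 : E x -> 0 < r -> 4 * r < R0 -> lt_diam X d R0 E ->
  C1 / Cd ^ 2 * Rpower (r / R0) q * mball x R0 <= real (mu (nbhd_in_ball r x R0)).
Proof.
  intros Hx Hr Hsmall Hdi.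
  set (R1 := R0 / 2). set (N := real (mu (nbhd_in_ball r x R0))).
  destruct (exists_separated_net (fun y => E y /\ d x y <= R1) x R1 (r / 2)) as [P [HP1 [HP2 HP3]]];
    try (unfold R1; lra).
  { intros y [_ H]; auto. }
  assert (Hadm : admissible_cover X d (fun y => E y /\ ball X d x R1 y) R1 (net_cover P (r / 2))).
  { split.
    - intros k p r' Hk. unfold net_cover in Hk. destruct (nth_error P k); inversion Hk. subst. unfold R1; lra.
    - intros y [Hy Hxy]. destruct (HP3 y (conj Hy Hxy)) as [p [Hp Hpy]].
      destruct (In_nth_error P p Hp) as [k Hk]. exists k, p, (r / 2). unfold net_cover. rewrite Hk. auto. }
  assert (H1 := Hcontent x R1 Hx ltac:(unfold R1; lra)
                  ltac:(apply lt_diam_mono with R0; auto; unfold R1; lra) _ _ Hadm (net_cover_series P (r / 2))).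
  simpl in H1. rewrite lsum_scal in H1.
  assert (H2 : lsum (fun p => mball p (r / 2)) P <= Cd * N).
  { apply Rle_trans with (Cd * lsum (fun p => mball p (r / 4)) P).
    - rewrite <- lsum_scal. apply lsum_le. intros p _. replace (r / 2) with (2 * (r / 4)) by field. apply HCd; lra.
    - apply Rmult_le_compat_l; [lra|]. apply nbhd_in_ball_ge_net; auto; try lra.
      intros p Hp. destruct (HP2 p Hp). unfold R1 in *. split; auto; lra. }
  assert (H3 : mball x R0 <= Cd * mball x R1).
  { replace Cd with (Cd ^ 1) at 1 by ring. apply mball_le_doubling; try (unfold R1; lra).
    rewrite dist_refl. simpl. unfold R1; lra. }
  replace (r / R0) with (r / 2 / R1) by (unfold R1; field; lra).
  rewrite Rpower_div by (unfold R1; lra).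
  set (A := Rpower (r / 2) q) in *. set (Rm := Rpower R1 (- q)) in *.
  assert (HAinv : A * Rpower (r / 2) (- q) = 1) by apply Rpower_mul_opp.
  assert (HA : 0 < A) by apply Rpower_pos. assert (HA' : 0 < Rpower (r / 2) (- q)) by apply Rpower_pos.
  assert (HRm : 0 < Rm) by apply Rpower_pos. assert (HmR1 : 0 < mball x R1) by (apply mball_pos; unfold R1; lra).
  assert (Hmass : C1 * Rm * mball x R1 <= Rpower (r / 2) (- q) * (Cd * N)) by nra.
  apply Rle_trans with (A / Cd * (C1 * Rm * mball x R1)).
  - apply Rle_trans with (C1 / Cd ^ 2 * (A * Rm) * (Cd * mball x R1)).
    + apply Rmult_le_compat_l; auto. apply Rmult_le_pos; [apply Rlt_le, Rdiv_lt_0_compat; [|apply pow_lt]|]; nra.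
    + right. field. lra.
  - apply Rle_trans with (A / Cd * (Rpower (r / 2) (- q) * (Cd * N))).
    + apply Rmult_le_compat_l; auto. apply Rlt_le, Rdiv_lt_0_compat; lra.
    + right. replace (A / Cd * (Rpower (r / 2) (- q) * (Cd * N))) with ((A * Rpower (r / 2) (- q)) * N)
        by (field; lra). rewrite HAinv. ring.
Qed.

End ContentToAssouad.

Lemma content_exp_assouad_exp E q : content_exps X d mu E q -> assouad_exps X d mu E q.
Proof.
  intros [Hq [C1 [HC1 Hcontent]]]. split; auto.
  exists (Rmin (C1 / Cd ^ 2) (1 / Cd ^ 3)). split.
  { apply Rmin_glb_lt; apply Rdiv_lt_0_compat; try lra; apply pow_lt; lra. }
  intros x r R0 Hx Hr HrR Hdi.
  fold (nbhd_in_ball E r x R0). rewrite nbhd_in_ball_finite by lra. simpl. fold (mball x R0).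
  assert (0 < mball x R0) by (apply mball_pos; lra).
  pose proof (Rpower_pos (r / R0) q).
  destruct (Rlt_le_dec (4 * r) R0) as [Hsmall|Hbig].
  - eapply Rle_trans; [|apply (assouad_bound_small_scale E q C1); auto].
    apply Rmult_le_compat_r; [lra|]. apply Rmult_le_compat_r; [lra|]. apply Rmin_l.
  - eapply Rle_trans; [|apply (assouad_bound_large_scale E q); auto; lra].
    apply Rmult_le_compat_r; [lra|]. apply Rmult_le_compat_r; [lra|]. apply Rmin_r.
Qed.

(** * Finite subcovers *)

Lemma geometric_antitone R0 (n m : nat) : 0 < R0 -> (n <= m)%nat -> R0 / 4 ^ m <= R0 / 4 ^ n.
Proof.
  intros HR H. unfold Rdiv. apply Rmult_le_compat_l; [lra|]. apply Rinv_le_contravar.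
  - apply pow_lt; lra.
  - apply Rle_pow; auto; lra.
Qed.

Lemma geometric_small R0 eps : 0 < R0 -> 0 < eps -> exists N, R0 / 4 ^ N < eps.
Proof.
  intros HR He. destruct (pow_unbounded 4 (R0 / eps + 1)) as [N HN]; [lra|]. exists N.
  assert (0 < 4 ^ N) by (apply pow_lt; lra).
  apply Rmult_lt_reg_r with (4 ^ N); auto. unfold Rdiv. rewrite Rmult_assoc, Rinv_l by lra.
  assert (R0 / eps * eps = R0) by (field; lra). nra.
Qed.

Lemma geometric_step_dist (f : nat -> X) R0 : 0 < R0 -> (forall n, d (f n) (f (S n)) <= R0 / 4 ^ n) ->
  forall n m, (n <= m)%nat -> d (f n) (f m) <= 4 / 3 * (R0 / 4 ^ n).
Proof.
  intros HR Hstep n m Hnm.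
  assert (Hk : forall k, d (f n) (f (n + k)%nat) <= 4 / 3 * (R0 / 4 ^ n) - 4 / 3 * (R0 / 4 ^ (n + k))).
  { induction k.
    - rewrite Nat.add_0_r, dist_refl. lra.
    - replace (n + S k)%nat with (S (n + k)) by lia.
      pose proof (dist_triangle (f n) (f (n + k)%nat) (f (S (n + k)))). pose proof (Hstep (n + k)%nat).
      simpl pow. assert (0 < 4 ^ (n + k)) by (apply pow_lt; lra).
      replace (4 / 3 * (R0 / (4 * 4 ^ (n + k)))) with (4 / 3 * (R0 / 4 ^ (n + k)) - R0 / 4 ^ (n + k))
        by (field; lra).
      lra. }
  replace m with (n + (m - n))%nat by lia. pose proof (Hk (m - n)%nat).
  assert (0 <= R0 / 4 ^ (n + (m - n))) by (apply Rlt_le, Rdiv_lt_0_compat; [|apply pow_lt]; lra). lra.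
Qed.

Section FiniteSubcover.
Variable E : X -> Prop.
Hypothesis Hcomplete : complete X d.
Hypothesis Hclosed : closed X d E.
Variable w : X.
Variable R0 : R.
Variable b : nat -> option (X * R).
Hypothesis HR0 : 0 < R0.
Hypothesis Hw : E w.
Hypothesis Hbpos : forall k x r, b k = Some (x, r) -> 0 < r.
Hypothesis Hbcov : forall y, E y -> d w y <= R0 -> exists k x r, b k = Some (x, r) /\ d x y <= r.

Definition finitely_covered z rho := exists N, forall y, E y -> d w y <= R0 -> d z y <= rho ->
  exists k x r, (k <= N)%nat /\ b k = Some (x, r) /\ d x y < 2 * r.

Lemma not_finitely_covered_split z rho : 0 < rho -> ~ finitely_covered z rho ->
  exists z', E z' /\ d w z' <= R0 /\ d z z' <= rho /\ ~ finitely_covered z' (rho / 4).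
Proof.
  intros Hr Hng.
  destruct (exists_separated_net (fun y => E y /\ d w y <= R0 /\ d z y <= rho) z rho (rho / 4))
    as [P [_ [HP2 HP3]]]; try lra.
  { intros y [_ [_ H]]; auto. }
  apply NNPP; intro Hn. apply Hng.
  destruct (exists_uniform_nat P (fun p N => forall y, E y -> d w y <= R0 -> d p y <= rho / 4 ->
       exists k x r, (k <= N)%nat /\ b k = Some (x, r) /\ d x y < 2 * r)) as [N HN].
  - intros p N N' HNN HQ y H1 H2 H3. destruct (HQ y H1 H2 H3) as [k [x [r [Hk Hb']]]].
    exists k, x, r; split; [lia|auto].
  - intros p Hp. apply NNPP; intro Hg. apply Hn. exists p. destruct (HP2 p Hp) as [H1 [H2 H3]]. auto.
  - exists N. intros y H1 H2 H3. destruct (HP3 y (conj H1 (conj H2 H3))) as [p [Hp Hpy]].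
    apply (HN p Hp); auto.
Qed.

Lemma closed_limit (f : nat -> X) l : (forall n, E (f n)) ->
  (forall eps, 0 < eps -> exists N, forall n, (N <= n)%nat -> d (f n) l < eps) -> E l.
Proof.
  intros Hf Hl. apply NNPP; intro Hnl. destruct (Hclosed l Hnl) as [r [Hr Hr']].
  destruct (Hl r Hr) as [N HN]. apply (Hr' (f N)); auto. rewrite dist_sym; apply HN; lia.
Qed.

(* The balls of doubled radius have a finite subcover: otherwise, repeatedly splitting a
   badly covered piece into pieces of a quarter of the size yields a Cauchy sequence of badly
   covered centres, whose limit lies in E and in some ball B(x, r) of the cover; but then
   B(x, 2 r) contains a whole badly covered piece. *)
Lemma finite_subcover : exists N, forall y, E y -> d w y <= R0 ->
  exists k x r, (k <= N)%nat /\ b k = Some (x, r) /\ d x y < 2 * r.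
Proof.
  apply NNPP; intro Hng.
  assert (Hrho : forall n, 0 < R0 / 4 ^ n) by (intro; apply Rdiv_lt_0_compat; [|apply pow_lt]; lra).
  destruct (dependent_choice_nat
              (fun n z => E z /\ d w z <= R0 /\ ~ finitely_covered z (R0 / 4 ^ n))
              (fun n z z' => d z z' <= R0 / 4 ^ n) w) as [f Hf].
  - rewrite dist_refl, pow_O, Rdiv_1_r. repeat split; auto; [lra|].
    intros [N HN]. apply Hng. exists N. intros y Hy Hwy. apply HN; auto.
  - intros n z [Hz [Hwz Hbad]].
    destruct (not_finitely_covered_split z (R0 / 4 ^ n) (Hrho n) Hbad) as [z' [H1 [H2 [H3 H4]]]].
    exists z'. replace (R0 / 4 ^ S n) with (R0 / 4 ^ n / 4)
      by (simpl; field; apply pow_nonzero; lra). auto.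
  - assert (Hcauchy := geometric_step_dist f R0 HR0 (fun n => proj2 (Hf n))).
    destruct (Hcomplete f) as [l Hl].
    { intros eps He. destruct (geometric_small R0 (3 / 4 * eps)) as [N HN]; [lra|lra|]. exists N.
      intros m n Hm Hn. destruct (Nat.le_ge_cases m n) as [Hmn|Hmn].
      - pose proof (Hcauchy m n Hmn). pose proof (geometric_antitone R0 N m HR0 Hm). lra.
      - rewrite dist_sym. pose proof (Hcauchy n m Hmn). pose proof (geometric_antitone R0 N n HR0 Hn). lra. }
    assert (HEl : E l) by (apply (closed_limit f); auto; intro n; apply Hf).
    assert (Hwl : d w l <= R0).
    { apply Rnot_lt_le; intro Hlt. destruct (Hl (d w l - R0)) as [N HN]; [lra|].
      specialize (HN N (le_n N)). destruct (Hf N) as [[_ [H _]] _].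
      pose proof (dist_triangle w (f N) l). lra. }
    destruct (Hbcov l HEl Hwl) as [k [x [r [Hbk Hxl]]]].
    assert (Hr : 0 < r) by (eapply Hbpos; eauto).
    destruct (Hl (r / 2)) as [N1 HN1]; [lra|].
    destruct (geometric_small R0 (r / 2)) as [N2 HN2]; [lra|lra|].
    set (n := Nat.max N1 N2).
    destruct (Hf n) as [[_ [_ Hbad]] _]. apply Hbad.
    exists k. intros y H1 H2 H3. exists k, x, r. repeat split; auto.
    pose proof (HN1 n (Nat.le_max_l _ _)). pose proof (geometric_antitone R0 N2 n HR0 (Nat.le_max_r _ _)).
    pose proof (dist_triangle x l y). pose proof (dist_triangle l (f n) y).
    rewrite (dist_sym l (f n)) in *. lra.
Qed.

End FiniteSubcover.

(** * The multiscale estimate for finite covers *)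

Section Multiscale.
Variable E : X -> Prop.
Variables s c q lam C : R.
Hypothesis Hs : 0 <= s.
Hypothesis Hc : 0 < c.
Hypothesis Hassouad : forall x r R0, E x -> 0 < r -> r < R0 -> lt_diam X d R0 E ->
  Rbar_le (Finite (c * Rpower (r / R0) s * real (mu (ball X d x R0))))
          (mu (fun y => nbhd X d E r y /\ ball X d x R0 y)).
Hypothesis Hq : s < q.
Hypothesis Hlam8 : 8 <= lam.
Hypothesis Hlam : 2 * Cd ^ 4 / (c / Cd ^ 3) <= Rpower lam (q - s).
Hypothesis HC : 0 < C.
Hypothesis HC_fine : C <= (c / Cd ^ 3) * Rpower lam (- s) / (2 * Cd ^ 3 * Rpower 2 q).
Hypothesis HC_coarse : C <= Rpower 2 (- q) / Cd.

Definition cover_weight (p : X * R) := Rpower (snd p) (- q) * mball (fst p) (snd p).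

Lemma cover_weight_nonneg p : 0 < snd p -> 0 <= cover_weight p.
Proof.
  intro. unfold cover_weight. pose proof (Rpower_pos (snd p) (- q)).
  pose proof (mball_pos (fst p) (snd p) H). nra.
Qed.

Definition covers (L : list (X * R)) w R0 :=
  forall y, E y -> d w y <= R0 -> exists p, In p L /\ d (fst p) y <= snd p.

Definition radii_between (L : list (X * R)) lo hi := forall p, In p L -> lo <= snd p <= hi.

Lemma lam_inv_le rho R0 : 0 < R0 -> rho = R0 / lam -> 0 < rho /\ rho <= R0 / 8.
Proof.
  intros HR ->. split; [apply Rdiv_lt_0_compat; lra|].
  apply Rmult_le_compat_l; [lra|]. apply Rinv_le_contravar; lra.
Qed.

Lemma nbhd_mass_le_net w R0 P rho : 0 < rho -> rho <= R0 / 8 ->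
  (forall y, E y -> d w y <= R0 / 2 -> exists cc, In cc P /\ d cc y <= rho) ->
  (forall cc, In cc P -> d w cc <= R0 / 2) ->
  real (mu (nbhd_in_ball E rho w (R0 / 4))) <= Cd * lsum (fun cc => mball cc rho) P.
Proof.
  intros Hrho Hrho8 Hcov HP.
  set (U := union_list (fun cc => ball X d cc (2 * rho)) P).
  assert (HU : subset U (ball X d w R0)).
  { intros y [cc [Hc' Hy]]. unfold ball in *. specialize (HP cc Hc'). pose proof (dist_triangle w cc y). lra. }
  apply Rle_trans with (real (mu U)); [|apply Rle_trans with (lsum (fun cc => mball cc (2 * rho)) P)].
  - apply measure_mono with w R0; auto using borel_nbhd_in_ball; try lra.
    { apply borel_union_list; intros; apply borel_ball. }
    intros y [[e [He Hye]] Hy]. unfold ball in Hy.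
    assert (Hwe : d w e <= R0 / 2) by (pose proof (dist_triangle w y e); lra).
    destruct (Hcov e He Hwe) as [cc [Hcc Hce]]. exists cc; split; auto. unfold ball.
    pose proof (dist_triangle cc e y). rewrite (dist_sym e y) in H. lra.
  - apply (measure_union_list_le (fun cc => ball X d cc (2 * rho)) P w R0); try lra; auto using borel_ball.
    intros t Ht y Hy. apply HU. exists t; auto.
  - rewrite <- lsum_scal. apply lsum_le. intros; apply HCd; auto.
Qed.

(* Assouad's condition at scale R0/4 and distance R0/lam. *)
Lemma net_mass_ge w R0 P : E w -> 0 < R0 -> lt_diam X d R0 E ->
  (forall y, E y -> d w y <= R0 / 2 -> exists cc, In cc P /\ d cc y <= R0 / lam) ->
  (forall cc, In cc P -> d w cc <= R0 / 2) ->
  (c / Cd ^ 3) * Rpower lam (- s) * mball w R0 <= lsum (fun cc => mball cc (R0 / lam)) P.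
Proof.
  intros Hw HR Hdi Hcov HP.
  set (rho := R0 / lam) in *. destruct (lam_inv_le rho R0 HR eq_refl) as [Hrho Hrho8].
  assert (H1 : c * Rpower (rho / (R0 / 4)) s * mball w (R0 / 4) <= real (mu (nbhd_in_ball E rho w (R0 / 4)))).
  { pose proof (Hassouad w rho (R0 / 4) Hw Hrho ltac:(lra) ltac:(apply lt_diam_mono with R0; auto; lra)) as HA.
    fold (nbhd_in_ball E rho w (R0 / 4)) in HA. rewrite (nbhd_in_ball_finite E) in HA by lra. exact HA. }
  assert (H2 := nbhd_mass_le_net w R0 P rho Hrho Hrho8 Hcov HP).
  assert (H3 : mball w R0 <= Cd ^ 2 * mball w (R0 / 4)).
  { apply mball_le_doubling; try lra. rewrite dist_refl. simpl. lra. }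
  assert (H4 : Rpower lam (- s) <= Rpower (rho / (R0 / 4)) s).
  { rewrite <- Rpower_inv by lra. apply Rle_Rpower_l; auto. split; [apply Rinv_0_lt_compat; lra|].
    replace (rho / (R0 / 4)) with (4 * / lam) by (unfold rho; field; lra).
    assert (0 < / lam) by (apply Rinv_0_lt_compat; lra). lra. }
  assert (0 < Rpower lam (- s)) by apply Rpower_pos.
  assert (0 < mball w R0) by (apply mball_pos; lra).
  assert (HCd3 : 0 < Cd ^ 3) by (apply pow_lt; lra).
  apply Rle_trans with (c / Cd ^ 3 * Rpower (rho / (R0 / 4)) s * (Cd ^ 2 * mball w (R0 / 4))).
  - apply Rmult_le_compat; try lra.
    + apply Rmult_le_pos; [apply Rlt_le, Rdiv_lt_0_compat|]; lra.
    + apply Rmult_le_compat_l; auto. apply Rlt_le, Rdiv_lt_0_compat; lra.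
  - apply Rmult_le_reg_l with Cd; [lra|].
    replace (Cd * (c / Cd ^ 3 * Rpower (rho / (R0 / 4)) s * (Cd ^ 2 * mball w (R0 / 4))))
      with (c * Rpower (rho / (R0 / 4)) s * mball w (R0 / 4)) by (field; lra).
    lra.
Qed.

Definition small_near rho cc (p : X * R) := decide (snd p <= 2 * rho /\ d cc (fst p) <= 3 * rho).
Definition big_near rho cc (p : X * R) := decide (2 * rho < snd p /\ d cc (fst p) <= 2 * snd p).

Lemma uncovered_big_near w R0 L cc rho : 0 < rho -> covers L w R0 -> d w cc + rho <= R0 ->
  ~ covers (filter (small_near rho cc) L) cc rho -> exists p, In p L /\ big_near rho cc p = true.
Proof.
  intros Hrho Hcov Hwc Hc'.
  apply not_all_ex_not in Hc'. destruct Hc' as [y Hy].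
  apply imply_to_and in Hy. destruct Hy as [Hey Hy]. apply imply_to_and in Hy. destruct Hy as [Hcy Hy].
  assert (Hwy : d w y <= R0) by (pose proof (dist_triangle w cc y); lra).
  destruct (Hcov y Hey Hwy) as [p [Hp Hpy]].
  assert (Hcp : d cc (fst p) <= rho + snd p)
    by (pose proof (dist_triangle cc y (fst p)); rewrite (dist_sym y (fst p)) in *; lra).
  exists p; split; auto. apply decide_intro.
  destruct (Rle_lt_dec (snd p) (2 * rho)) as [Hsm|Hbg]; [|split; auto; lra].
  exfalso. apply Hy. exists p; split; auto. apply filter_In; split; auto. apply decide_intro. lra.
Qed.

(* Each point cc of the net is either covered by the small balls near it, to which the induction
   hypothesis at scale R0/lam applies, or it lies within a big ball. *)
Lemma net_point_mass_le t w R0 L cc : 0 < R0 -> radii_between L (R0 / lam ^ S t) (2 * R0) -> covers L w R0 ->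
  E cc -> d w cc <= R0 / 2 ->
  (forall w' L', E w' -> radii_between L' ((R0 / lam) / lam ^ t) (2 * (R0 / lam)) -> covers L' w' (R0 / lam) ->
     C * Rpower (R0 / lam) (- q) * mball w' (R0 / lam) <= lsum cover_weight L') ->
  mball cc (R0 / lam) <= Rpower (R0 / lam) q / C * lsum cover_weight (filter (small_near (R0 / lam) cc) L)
                      + lsum (fun p => if big_near (R0 / lam) cc p then mball cc (R0 / lam) else 0) L.
Proof.
  intros HR Hrad Hcov Hcc Hwc IH.
  set (rho := R0 / lam) in *. destruct (lam_inv_le rho R0 HR eq_refl) as [Hrho Hrho8].
  assert (Hlt : 0 < lam ^ S t) by (apply pow_lt; lra).
  assert (Hpos : forall p, In p L -> 0 < snd p).
  { intros p Hp. destruct (Hrad p Hp). assert (0 < R0 / lam ^ S t) by (apply Rdiv_lt_0_compat; lra). lra. }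
  assert (Hsmall : 0 <= lsum cover_weight (filter (small_near rho cc) L)).
  { apply lsum_nonneg. intros p Hp. apply filter_In in Hp. apply cover_weight_nonneg, Hpos; tauto. }
  assert (Hbig : forall p, In p L -> 0 <= (if big_near rho cc p then mball cc rho else 0)).
  { intros p _. destruct (big_near rho cc p); [apply Rlt_le, mball_pos|]; lra. }
  assert (0 <= lsum (fun p => if big_near rho cc p then mball cc rho else 0) L) by (apply lsum_nonneg; auto).
  assert (HRq : 0 < Rpower rho q / C) by (apply Rdiv_lt_0_compat; [apply Rpower_pos|lra]).
  destruct (classic (covers (filter (small_near rho cc) L) cc rho)) as [Hc'|Hc'].
  - assert (Hih : C * Rpower rho (- q) * mball cc rho <= lsum cover_weight (filter (small_near rho cc) L)).
    { apply IH; auto. intros p Hp. apply filter_In in Hp. destruct Hp as [Hp Hs'].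
      apply decide_elim in Hs'. destruct (Hrad p Hp).
      replace (rho / lam ^ t) with (R0 / lam ^ S t)
        by (unfold rho; simpl; field; repeat split; try apply pow_nonzero; lra).
      lra. }
    enough (mball cc rho <= Rpower rho q / C * lsum cover_weight (filter (small_near rho cc) L)) by lra.
    apply Rmult_le_compat_l with (r := Rpower rho q / C) in Hih; [|lra].
    replace (Rpower rho q / C * (C * Rpower rho (- q) * mball cc rho))
      with ((Rpower rho q * Rpower rho (- q)) * mball cc rho) in Hih by (field; lra).
    rewrite Rpower_mul_opp, Rmult_1_l in Hih. exact Hih.
  - destruct (uncovered_big_near w R0 L cc rho Hrho Hcov ltac:(lra) Hc') as [p [Hp Hb]].
    enough (mball cc rho <= lsum (fun p => if big_near rho cc p then mball cc rho else 0) L) by nra.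
    replace (mball cc rho) with ((fun p => if big_near rho cc p then mball cc rho else 0) p) at 1
      by (simpl; rewrite Hb; auto).
    apply (lsum_ge_term (fun p => if big_near rho cc p then mball cc rho else 0)); auto.
Qed.

Lemma small_part_le rho P L : 0 < rho -> separated rho P -> (forall p, In p L -> 0 < snd p) ->
  lsum (fun cc => lsum cover_weight (filter (small_near rho cc) L)) P <= Cd ^ 4 * lsum cover_weight L.
Proof.
  intros Hr HP HL.
  rewrite (lsum_ext _ (fun cc => lsum (fun p => cover_weight p * (if small_near rho cc p then 1 else 0)) L))
    by (intros cc _; rewrite lsum_filter; apply lsum_ext; intros p _; destruct (small_near rho cc p); ring).
  rewrite lsum_swap, <- lsum_scal. apply lsum_le. intros p Hp.
  rewrite lsum_scal, lsum_indicator, (Rmult_comm (Cd ^ 4)).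
  apply Rmult_le_compat_l; [apply cover_weight_nonneg; auto|].
  apply (separated_length_le rho _ (fst p) (3 * rho) 4); try lra.
  - apply separated_filter; auto.
  - intros cc Hcc. apply filter_In in Hcc. destruct Hcc as [_ Hcc].
    apply decide_elim in Hcc. rewrite dist_sym; tauto.
Qed.

(* The net points near a big ball p are rho-separated and lie in B(p, 2 rad p), so by doubling
   their total mass is at most Cd^3 mball p. *)
Lemma big_ball_share_le rho P p : 0 < rho -> separated rho P -> 2 * rho < snd p ->
  lsum (fun cc => if big_near rho cc p then mball cc rho else 0) P <= Cd ^ 3 * mball (fst p) (snd p).
Proof.
  intros Hr HP Hbig.
  rewrite <- lsum_filter. set (P' := filter (fun cc => big_near rho cc p) P).
  assert (Hin : forall cc, In cc P' -> d (fst p) cc <= 2 * snd p).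
  { intros cc Hcc. apply filter_In in Hcc. destruct Hcc as [_ Hcc].
    apply decide_elim in Hcc. rewrite dist_sym; tauto. }
  assert (H1 : lsum (fun cc => mball cc rho) P' <= Cd * lsum (fun cc => mball cc (rho / 2)) P').
  { rewrite <- lsum_scal. apply lsum_le. intros cc _.
    replace rho with (2 * (rho / 2)) at 1 by field. apply HCd. lra. }
  assert (H2 : lsum (fun cc => mball cc (rho / 2)) P' <= mball (fst p) (2 * snd p + rho / 2))
    by (apply separated_mass_le; auto; [lra|apply separated_filter; auto]).
  assert (H3 : mball (fst p) (2 * snd p + rho / 2) <= Cd ^ 2 * mball (fst p) (snd p)).
  { apply mball_le_doubling; try lra. rewrite dist_refl. simpl. lra. }
  replace (Cd ^ 3) with (Cd * Cd ^ 2) by ring. nra.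
Qed.

Lemma big_part_le rho P L R0 : 0 < rho -> separated rho P -> radii_between L 0 (2 * R0) ->
  (forall p, In p L -> 0 < snd p) ->
  lsum (fun cc => lsum (fun p => if big_near rho cc p then mball cc rho else 0) L) P
    <= Cd ^ 3 * Rpower (2 * R0) q * lsum cover_weight L.
Proof.
  intros Hr HP Hrad HL.
  rewrite lsum_swap, <- lsum_scal. apply lsum_le. intros p Hp.
  assert (Hrp := HL p Hp).
  assert (Hw : mball (fst p) (snd p) <= Rpower (2 * R0) q * cover_weight p).
  { unfold cover_weight. rewrite <- Rmult_assoc.
    assert (Rpower (2 * R0) (- q) <= Rpower (snd p) (- q))
      by (apply Rpower_opp_antitone; auto; [apply Hrad; auto|lra]).
    assert (1 <= Rpower (2 * R0) q * Rpower (snd p) (- q)).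
    { rewrite <- (Rpower_mul_opp (2 * R0) q). apply Rmult_le_compat_l; auto. apply Rlt_le, Rpower_pos. }
    assert (0 < mball (fst p) (snd p)) by (apply mball_pos; auto). nra. }
  assert (HCd3 : 0 < Cd ^ 3) by (apply pow_lt; lra).
  destruct (Rlt_dec (2 * rho) (snd p)) as [Hbig|Hsm].
  - eapply Rle_trans; [apply big_ball_share_le; auto|]. rewrite Rmult_assoc. apply Rmult_le_compat_l; lra.
  - rewrite (lsum_ext _ (fun _ => 0)), lsum_const, Rmult_0_r.
    + assert (0 <= cover_weight p) by (apply cover_weight_nonneg; auto).
      pose proof (Rpower_pos (2 * R0) q). apply Rmult_le_pos; [|auto]. apply Rmult_le_pos; lra.
    + intros cc _. destruct (big_near rho cc p) eqn:Eb; auto.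
      apply decide_elim in Eb. lra.
Qed.

(* This is where the choice of lam (large, as q > s) and of C (small) is used. *)
Lemma multiscale_constant_le R0 : 0 < R0 ->
  C * Rpower R0 (- q) * (Rpower (R0 / lam) q / C * Cd ^ 4 + Cd ^ 3 * Rpower (2 * R0) q)
    <= c / Cd ^ 3 * Rpower lam (- s).
Proof.
  intro HR.
  set (a := c / Cd ^ 3). set (Ls := Rpower lam (- s)). set (M := Cd ^ 4).
  assert (HCd3 : 0 < Cd ^ 3) by (apply pow_lt; lra).
  assert (Ha : 0 < a) by (apply Rdiv_lt_0_compat; lra).
  assert (E1 : Rpower (R0 / lam) q = Rpower R0 q * Rpower lam (- q)) by (apply Rpower_div; lra).
  assert (E2 : Rpower (2 * R0) q = Rpower 2 q * Rpower R0 q) by (rewrite Rpower_mult_distr; lra).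
  assert (E3 : Rpower R0 (- q) * Rpower R0 q = 1) by (rewrite Rmult_comm; apply Rpower_mul_opp).
  assert (E4 : Ls = Rpower lam (q - s) * Rpower lam (- q)) by (unfold Ls; rewrite <- Rpower_plus; f_equal; ring).
  assert (HM : M * Rpower lam (- q) <= a * Ls / 2).
  { rewrite E4. assert (0 < Rpower lam (- q)) by apply Rpower_pos.
    assert (2 * M <= a * Rpower lam (q - s)).
    { replace (2 * M) with (2 * M / a * a) by (field; lra). rewrite Rmult_comm.
      apply Rmult_le_compat_l; [lra|exact Hlam]. }
    nra. }
  assert (HC' : C * Cd ^ 3 * Rpower 2 q <= a * Ls / 2).
  { assert (0 < 2 * Cd ^ 3 * Rpower 2 q) by (pose proof (Rpower_pos 2 q); nra).
    assert (HC2 : C * (2 * Cd ^ 3 * Rpower 2 q) <= a * Ls / (2 * Cd ^ 3 * Rpower 2 q) * (2 * Cd ^ 3 * Rpower 2 q))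
      by (apply Rmult_le_compat_r; [lra|exact HC_fine]).
    replace (a * Ls / (2 * Cd ^ 3 * Rpower 2 q) * (2 * Cd ^ 3 * Rpower 2 q)) with (a * Ls) in HC2
      by (field; pose proof (Rpower_pos 2 q); repeat split; lra).
    lra. }
  rewrite E1, E2.
  replace (C * Rpower R0 (- q) * (Rpower R0 q * Rpower lam (- q) / C * M + Cd ^ 3 * (Rpower 2 q * Rpower R0 q)))
    with ((Rpower R0 (- q) * Rpower R0 q) * (M * Rpower lam (- q) + C * Cd ^ 3 * Rpower 2 q)) by (field; lra).
  rewrite E3. lra.
Qed.

Lemma cover_weight_ge_coarse w R0 L : E w -> 0 < R0 -> radii_between L R0 (2 * R0) -> covers L w R0 ->
  C * Rpower R0 (- q) * mball w R0 <= lsum cover_weight L.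
Proof.
  intros Hw HR Hrad Hcov.
  destruct (Hcov w Hw) as [p [Hp Hpw]]; [rewrite dist_refl; lra|].
  destruct (Hrad p Hp) as [Hr1 Hr2].
  assert (H1 : mball w R0 <= Cd * mball (fst p) (snd p)).
  { replace Cd with (Cd ^ 1) at 1 by ring. apply mball_le_doubling; simpl; lra. }
  assert (H2 : Rpower (2 * R0) (- q) <= Rpower (snd p) (- q)) by (apply Rpower_opp_antitone; lra).
  rewrite <- Rpower_mult_distr in H2 by lra.
  assert (H3 : cover_weight p <= lsum cover_weight L).
  { apply lsum_ge_term; auto. intros p' Hp'. apply cover_weight_nonneg. destruct (Hrad p' Hp'); lra. }
  change (cover_weight p) with (Rpower (snd p) (- q) * mball (fst p) (snd p)) in H3.
  assert (0 < Rpower R0 (- q)) by apply Rpower_pos.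
  assert (0 < mball w R0) by (apply mball_pos; auto).
  assert (0 < mball (fst p) (snd p)) by (apply mball_pos; lra).
  apply Rle_trans with (Rpower 2 (- q) / Cd * Rpower R0 (- q) * (Cd * mball (fst p) (snd p))).
  - apply Rmult_le_compat; try nra.
  - replace (Rpower 2 (- q) / Cd * Rpower R0 (- q) * (Cd * mball (fst p) (snd p)))
      with (Rpower 2 (- q) * Rpower R0 (- q) * mball (fst p) (snd p)) by (field; lra).
    nra.
Qed.

Lemma cover_weight_ge_step t w R0 L : E w -> 0 < R0 -> lt_diam X d R0 E ->
  radii_between L (R0 / lam ^ S t) (2 * R0) -> covers L w R0 ->
  (forall w' L', E w' -> radii_between L' ((R0 / lam) / lam ^ t) (2 * (R0 / lam)) -> covers L' w' (R0 / lam) ->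
     C * Rpower (R0 / lam) (- q) * mball w' (R0 / lam) <= lsum cover_weight L') ->
  C * Rpower R0 (- q) * mball w R0 <= lsum cover_weight L.
Proof.
  intros Hw HR Hdi Hrad Hcov IH.
  set (rho := R0 / lam) in *. destruct (lam_inv_le rho R0 HR eq_refl) as [Hrho Hrho8].
  assert (Hpos : forall p, In p L -> 0 < snd p).
  { intros p Hp. destruct (Hrad p Hp).
    assert (0 < R0 / lam ^ S t) by (apply Rdiv_lt_0_compat; [|apply pow_lt]; lra). lra. }
  destruct (exists_separated_net (fun y => E y /\ d w y <= R0 / 2) w (R0 / 2) rho) as [P [HP1 [HP2 HP3]]];
    try lra.
  { intros y [_ Hy]; auto. }
  assert (Hlow := net_mass_ge w R0 P Hw HR Hdi (fun y Hy Hwy => HP3 y (conj Hy Hwy))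
                    (fun cc Hcc => proj2 (HP2 cc Hcc))).
  fold rho in Hlow.
  assert (Hsplit := lsum_le _ _ P (fun cc Hcc => net_point_mass_le t w R0 L cc HR Hrad Hcov
                                        (proj1 (HP2 cc Hcc)) (proj2 (HP2 cc Hcc)) IH)).
  rewrite lsum_plus, lsum_scal in Hsplit. fold rho in Hsplit.
  pose proof (small_part_le rho P L Hrho HP1 Hpos) as Hsmall.
  assert (Hbig : lsum (fun cc => lsum (fun p => if big_near rho cc p then mball cc rho else 0) L) P
                   <= Cd ^ 3 * Rpower (2 * R0) q * lsum cover_weight L).
  { apply big_part_le; auto. intros p Hp. split; [apply Rlt_le|]; auto. apply Hrad; auto. }
  set (K := Rpower rho q / C * Cd ^ 4 + Cd ^ 3 * Rpower (2 * R0) q).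
  set (V := lsum cover_weight L).
  assert (HV : 0 <= V) by (apply lsum_nonneg; intros; apply cover_weight_nonneg; auto).
  assert (Hq0 : 0 < Rpower rho q / C) by (apply Rdiv_lt_0_compat; [apply Rpower_pos|lra]).
  assert (HK : c / Cd ^ 3 * Rpower lam (- s) * mball w R0 <= K * V).
  { unfold K, V. apply Rmult_le_compat_l with (r := Rpower rho q / C) in Hsmall; lra. }
  assert (HKC := multiscale_constant_le R0 HR). fold rho K in HKC.
  assert (Ha : 0 < c / Cd ^ 3 * Rpower lam (- s)).
  { apply Rmult_lt_0_compat; [apply Rdiv_lt_0_compat; [|apply pow_lt]; lra|apply Rpower_pos]. }
  assert (0 < Rpower R0 (- q)) by apply Rpower_pos.
  apply Rmult_le_reg_l with (c / Cd ^ 3 * Rpower lam (- s)); auto.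
  apply Rle_trans with (C * Rpower R0 (- q) * (K * V)).
  - replace (c / Cd ^ 3 * Rpower lam (- s) * (C * Rpower R0 (- q) * mball w R0))
      with (C * Rpower R0 (- q) * (c / Cd ^ 3 * Rpower lam (- s) * mball w R0)) by ring.
    apply Rmult_le_compat_l; auto. apply Rmult_le_pos; lra.
  - rewrite <- Rmult_assoc. apply Rmult_le_compat_r; auto.
Qed.

Lemma cover_weight_ge t : forall w R0 L, E w -> 0 < R0 -> lt_diam X d R0 E ->
  radii_between L (R0 / lam ^ t) (2 * R0) -> covers L w R0 ->
  C * Rpower R0 (- q) * mball w R0 <= lsum cover_weight L.
Proof.
  induction t; intros w R0 L Hw HR Hdi Hrad Hcov.
  - rewrite pow_O, Rdiv_1_r in Hrad. apply cover_weight_ge_coarse; auto.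
  - apply (cover_weight_ge_step t w R0 L); auto.
    intros w' L' Hw' Hr' Hc'. destruct (lam_inv_le (R0 / lam) R0 HR eq_refl).
    apply IHt; auto; try lra. apply lt_diam_mono with R0; auto; lra.
Qed.

Definition doubled_ball (o : option (X * R)) : list (X * R) :=
  match o with Some (x, r) => (x, 2 * r) :: nil | None => nil end.

Fixpoint doubled_balls (b : nat -> option (X * R)) (N : nat) : list (X * R) :=
  match N with
  | 0%nat => doubled_ball (b 0%nat)
  | S N' => doubled_ball (b N) ++ doubled_balls b N'
  end.

Lemma in_doubled_balls b N k x r : (k <= N)%nat -> b k = Some (x, r) -> In (x, 2 * r) (doubled_balls b N).
Proof.
  induction N; intros Hk Hb.
  - replace k with 0%nat in Hb by lia. simpl. rewrite Hb. simpl; auto.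
  - simpl. apply in_or_app. destruct (Nat.eq_dec k (S N)) as [->|Hne].
    + left. rewrite Hb. simpl; auto.
    + right. apply IHN; auto; lia.
Qed.

Lemma doubled_balls_inv b N p : In p (doubled_balls b N) -> exists k x r, b k = Some (x, r) /\ p = (x, 2 * r).
Proof.
  assert (Hone : forall k, In p (doubled_ball (b k)) -> exists k x r, b k = Some (x, r) /\ p = (x, 2 * r)).
  { intros k H. destruct (b k) as [[x r]|] eqn:Eb; simpl in H; [|contradiction].
    destruct H as [<-|[]]. exists k, x, r; auto. }
  induction N; simpl; intro H; [apply (Hone 0%nat H)|].
  apply in_app_or in H. destruct H as [H|H]; [apply (Hone (S N) H)|auto].
Qed.

Section Covers.
Variable b : nat -> option (X * R).
Hypothesis Hbpos : forall k x r, b k = Some (x, r) -> 0 < r.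

Lemma cover_term_nonneg k : 0 <= real (cover_term X d mu q (b k)).
Proof.
  destruct (b k) as [[x r]|] eqn:Eb; simpl; [|lra].
  pose proof (Hbpos k x r Eb). pose proof (Rpower_pos r (- q)). pose proof (mball_pos x r H).
  unfold mball in H1. nra.
Qed.

Lemma doubled_balls_weight_le N :
  lsum cover_weight (doubled_balls b N) <= Cd * sum_f_R0 (fun k => real (cover_term X d mu q (b k))) N.
Proof.
  assert (Hone : forall k, lsum cover_weight (doubled_ball (b k)) <= Cd * real (cover_term X d mu q (b k))).
  { intro k. destruct (b k) as [[x r]|] eqn:Eb; simpl; [|lra].
    pose proof (Hbpos k x r Eb) as Hr. unfold cover_weight; simpl.
    assert (H1 : Rpower (2 * r) (- q) <= Rpower r (- q)) by (apply Rpower_opp_antitone; lra).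
    assert (H2 : mball x (2 * r) <= Cd * mball x r) by (apply HCd; auto).
    pose proof (Rpower_pos (2 * r) (- q)). pose proof (mball_pos x r Hr). pose proof (mball_pos x (2 * r)).
    fold (mball x r). nra. }
  induction N; simpl; [apply Hone|]. rewrite lsum_app. pose proof (Hone (S N)). lra.
Qed.

Lemma partial_sum_le S N : Rbar_series (fun k => cover_term X d mu q (b k)) S ->
  Rbar_le (Finite (sum_f_R0 (fun k => real (cover_term X d mu q (b k))) N)) S.
Proof.
  intros [[l [Hl [_ Hcv]]] | [Hv _]]; subst; simpl; auto.
  apply growing_ineq; auto. intro n. simpl. pose proof (cover_term_nonneg (S n)). lra.
Qed.

End Covers.

Hypothesis Hcomplete : complete X d.
Hypothesis Hclosed : closed X d E.

(* By compactness the doubled balls of finitely many members of any admissible cover still cover;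
   their radii are bounded below, so the multiscale estimate applies with finitely many scales. *)
Lemma content_lower_bound w R0 : E w -> 0 < R0 -> lt_diam X d R0 E ->
  hcontent_ge X d mu q R0 (fun y => E y /\ ball X d w R0 y) (C / Cd * Rpower R0 (- q) * mball w R0).
Proof.
  intros Hw HR Hdi b S [Hb1 Hb2] Hser.
  assert (Hbpos : forall k x r, b k = Some (x, r) -> 0 < r) by (intros; eapply Hb1; eauto).
  destruct (finite_subcover E Hcomplete Hclosed w R0 b HR Hw Hbpos) as [N HN].
  { intros y Hy Hwy. destruct (Hb2 y (conj Hy Hwy)) as [k [x [r [H1 H2]]]]. exists k, x, r; auto. }
  set (L := doubled_balls b N).
  assert (HLp : forall p, In p L -> 0 < snd p /\ snd p <= 2 * R0).
  { intros p Hp. destruct (doubled_balls_inv b N p Hp) as [k [x [r [Hk ->]]]].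
    destruct (Hb1 k x r Hk). simpl; lra. }
  destruct (exists_pos_lower_bound L) as [m [Hm Hm']]; [intros; apply HLp; auto|].
  destruct (pow_unbounded lam (R0 / m)) as [t Ht]; [lra|].
  assert (Hmain : C * Rpower R0 (- q) * mball w R0 <= lsum cover_weight L).
  { apply (cover_weight_ge t); auto.
    - intros p Hp. split; [|apply HLp; auto]. apply Rle_trans with m; auto.
      assert (0 < lam ^ t) by (apply pow_lt; lra).
      apply Rmult_le_reg_r with (lam ^ t); auto.
      unfold Rdiv. rewrite Rmult_assoc, Rinv_l by lra.
      apply Rmult_le_compat_r with (r := m) in Ht; [|lra]. unfold Rdiv in Ht.
      rewrite Rmult_assoc, Rinv_l, Rmult_1_r in Ht by lra. lra.
    - intros y Hy Hwy. destruct (HN y Hy Hwy) as [k [x [r [Hk [Hbk Hxy]]]]].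
      exists (x, 2 * r). split; [apply in_doubled_balls with k; auto|simpl; lra]. }
  pose proof (doubled_balls_weight_le b Hbpos N) as HV. fold L in HV.
  pose proof (partial_sum_le b Hbpos S N Hser) as HS.
  destruct S as [l|]; simpl in *; auto.
  replace (C / Cd * Rpower R0 (- q) * mball w R0) with ((C * Rpower R0 (- q) * mball w R0) / Cd)
    by (field; lra).
  apply Rmult_le_reg_r with Cd; [lra|]. unfold Rdiv. rewrite Rmult_assoc, Rinv_l, Rmult_1_r by lra.
  assert (Cd * sum_f_R0 (fun k => real (cover_term X d mu q (b k))) N <= Cd * l)
    by (apply Rmult_le_compat_l; lra).
  lra.
Qed.

End Multiscale.

(** * Assouad exponents give content exponents *)

Lemma assouad_exp_content_exp E s q : complete X d -> closed X d E ->
  assouad_exps X d mu E s -> s < q -> content_exps X d mu E q.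
Proof.
  intros Hcomplete Hclosed [Hs [c [Hc Hassouad]]] Hsq. split; [lra|].
  assert (HCd3 : 0 < Cd ^ 3) by (apply pow_lt; lra).
  set (K := 2 * Cd ^ 4 / (c / Cd ^ 3)).
  assert (HK : 0 < K) by (apply Rdiv_lt_0_compat; [pose proof (pow_lt Cd 4); lra|apply Rdiv_lt_0_compat; lra]).
  set (lam := 8 + Rpower K (/ (q - s))).
  assert (Hlam8 : 8 <= lam) by (pose proof (Rpower_pos K (/ (q - s))); unfold lam; lra).
  assert (Hlam : K <= Rpower lam (q - s)).
  { replace K with (Rpower (Rpower K (/ (q - s))) (q - s)) at 1
      by (rewrite Rpower_mult, Rinv_l by lra; apply Rpower_1; auto).
    apply Rle_Rpower_l; [lra|]. split; [apply Rpower_pos|unfold lam; lra]. }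
  set (C := Rmin ((c / Cd ^ 3) * Rpower lam (- s) / (2 * Cd ^ 3 * Rpower 2 q)) (Rpower 2 (- q) / Cd)).
  assert (HC : 0 < C).
  { pose proof (Rpower_pos 2 q). pose proof (Rpower_pos lam (- s)).
    apply Rmin_glb_lt; apply Rdiv_lt_0_compat; try apply Rpower_pos; try nra.
    apply Rmult_lt_0_compat; auto. apply Rdiv_lt_0_compat; lra. }
  exists (C / Cd). split; [apply Rdiv_lt_0_compat; lra|].
  intros w R0 Hw HR0 Hdi.
  apply (content_lower_bound E s c q lam C); auto; [apply Rmin_l|apply Rmin_r].
Qed.

End Doubling.

Lemma doubling_constant : doubling X d mu ->
  exists Cd, 1 <= Cd /\ forall x r, 0 < r -> mball x (2 * r) <= Cd * mball x r.
Proof.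
  intros [Cd0 HCd0]. exists (Rmax Cd0 1). split; [apply Rmax_r|].
  intros x r Hr. specialize (HCd0 x r Hr).
  destruct (mball_spec x (2 * r)) as [E1 P1]; [lra|].
  destruct (mball_spec x r) as [E2 P2]; [lra|].
  rewrite E1 in HCd0. simpl in HCd0. fold (mball x r) in HCd0.
  assert (Cd0 * mball x r <= Rmax Cd0 1 * mball x r) by (apply Rmult_le_compat_r; [lra|apply Rmax_l]).
  lra.
Qed.

End MetricMeasure.

Lemma is_glb_iff_of_dense (P Q : R -> Prop) a : (forall q, Q q -> P q) -> (forall s q, P s -> s < q -> Q q) ->
  is_glb P a <-> is_glb Q a.
Proof.
  intros HQP HPQ.
  assert (Hle : forall m s, (forall q, s < q -> m <= q) -> m <= s).
  { intros m s H. apply Rnot_lt_le; intro Hlt. specialize (H ((s + m) / 2)). lra. }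
  split; intros [H1 H2]; split.
  - intros q Hq. apply H1, HQP; auto.
  - intros m' Hm'. apply H2. intros s Hs. apply Hle. intros q Hsq. apply Hm'. eapply HPQ; eauto.
  - intros s Hs. apply Hle. intros q Hsq. apply H1. eapply HPQ; eauto.
  - intros m' Hm'. apply H2. intros q Hq. apply Hm', HQP; auto.
Qed.

Theorem corollary5p2 (X : Type) (d : X -> X -> R) (mu : (X -> Prop) -> Rbar)
  (Hd : is_metric X d) (Hc : complete X d) (Hmu : is_borel_measure X d mu)
  (Hb : balls_pos_fin X d mu) (Hdb : doubling X d mu)
  (E : X -> Prop) (HE : closed X d E) :
  forall a : R, is_glb (assouad_exps X d mu E) a <-> is_glb (content_exps X d mu E) a.
Proof.
  destruct (doubling_constant X d mu Hb Hdb) as [Cd [HCd1 HCd]].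
  intro a. apply is_glb_iff_of_dense.
  - apply (content_exp_assouad_exp X d mu Hd Hmu Hb Cd HCd1 HCd).
  - intros s q Hs Hsq. apply (assouad_exp_content_exp X d mu Hd Hmu Hb Cd HCd1 HCd E s q); auto.
Qed.
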